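(* Let $m\ge 1$ and $n\ge 1$ be integers and let $G=K_m\circ\overline{K_n}$ (equivalently, the complete $m$-partite graph $K_{n,n,\ldots,n}$ with $m$ parts of size $n$), a graph on $mn$ vertices. If $n\ge 2$, then $G$ is orientable $\mathbb{Z}_{mn}$-distance magic if and only if $n\not\equiv 1\pmod 2$ or $m\not\equiv 2\pmod 4$. If $n=1$ (so $G=K_m$), then $G$ is orientable $\mathbb{Z}_{m}$-distance magic if and only if $m$ is odd.
   Context: For graphs $G,H$, the lexicographic product $G\circ H$ has vertex set $V(G)\times V(H)$, with $(g,h)$ adjacent to $(g',h')$ iff $g$ is adjacent to $g'$ in $G$, or $g=g'$ and $h$ is adjacent to $h'$ in $H$. $\overline{K_n}$ denotes the edgeless graph on $n$ vertices. For an oriented graph $\vec G$ and a vertex $x$, $N^+(x)$ is the set of vertices $y$ with an arc from $x$ to $y$, and $N^-(x)$ is the set of vertices $y$ with an arc from $y$ to $x$. For an Abelian group $\Gamma$ of order $n$, a directed $\Gamma$-distance magic labeling of an oriented graph $\vec G$ of order $n$ is a bijection $\vec l:V\to\Gamma$ such that there is $\mu\in\Gamma$ with $\sum_{y\in N^+(x)}\vec l(y)-\sum_{y\in N^-(x)}\vec l(y)=\mu$ for every vertex $x$. A simple graph $G$ of order $n$ is orientable $\Gamma$-distance magic if some orientation of its edges admits a directed $\Gamma$-distance magic labeling. $\mathbb{Z}_n$ is the cyclic group of integers modulo $n$. *)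

From HB Require Import structures.
From mathcomp Require Import all_boot all_order all_algebra.
Set Implicit Arguments. Unset Strict Implicit. Unset Printing Implicit Defensive.
Import GRing.Theory.
Local Open Scope ring_scope.

(* The cyclic group Z_k for k >= 1, represented by 'I_k with its canonical
   additive group structure ('I_(k.-1.+1) is convertible to 'I_k for k >= 1,
   and unlike 'Z_k it is the trivial group for k = 1). *)
Definition Zcyc (k : nat) : finZmodType := 'I_(k.-1.+1).

(* Lexicographic product K_m o (edgeless graph on n vertices):
   (g,h) ~ (g',h') iff g ~ g' in K_m (i.e. g != g'), or g = g' and h ~ h'
   in the edgeless graph (never). *)
Definition KmLexEmpty (m n : nat) : rel ('I_m * 'I_n) :=
  fun x y => (x.1 != y.1) || ((x.1 == y.1) && false).

Definition is_orientation (V : finType) (adj : rel V) (o : rel V) : Prop :=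
  forall x y, adj x y = (o x y || o y x) /\ ~~ (o x y && o y x).

Definition directed_distance_magic (V : finType) (Gam : zmodType)
    (o : rel V) (l : V -> Gam) : Prop :=
  bijective l /\
  exists mu : Gam, forall x : V,
    (\sum_(y | o x y) l y) - (\sum_(y | o y x) l y) = mu.

Definition orientable_distance_magic (V : finType) (Gam : zmodType)
    (adj : rel V) : Prop :=
  exists o : rel V, is_orientation adj o /\
    exists l : V -> Gam, directed_distance_magic o l.

(* If m is odd or n is
   even, label vertex (i, j) of the i-th part by i + m j in Z_mn and orient
   x -> y when l(y) - l(x) lies in a fixed "half" D of the non-multiples of m
   (D and -D partition them); then the magic sum at every vertex is
   sum_{d in D} 2d.  If 4 | m and n is odd, orient the edges between parts
   according to the order of the parts, twisted by a sign on the vertices,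
   and label so that every part has signed label sum zero; then every vertex
   has magic sum 0.
   Necessity: when m is even, the parity of the labels is a homomorphism
   Z_mn -> Z_2, so the parities of the label sums of the parts all agree;
   as there are an even number of parts, the total label sum 0 + ... + (mn-1)
   is even, i.e. 4 | mn.  This fails for m = 2 mod 4 and n odd, and for
   n = 1 the parts are single vertices, which cannot all carry labels of the
   same parity. *)

From mathcomp Require Import all_boot all_order all_algebra zify.
Set Implicit Arguments. Unset Strict Implicit. Unset Printing Implicit Defensive.
Import GRing.Theory.

Section DifferenceOrientation.
Variables (V : finType) (Gam : finZmodType) (l : V -> Gam) (D : pred Gam).

Definition diff_orient : rel V := fun x y => D (l y - l x)%R.

Lemma diff_orient_magic : bijective l -> directed_distance_magic diff_orient l.
Proof.
move=> l_bij; split=> //; exists (\sum_(z | D z) (z + z))%R => x.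
have reindex_l (P : pred Gam) : (\sum_(y | P (l y)) l y = \sum_(z | P z) z)%R.
  by rewrite (reindex l) //; exact: onW_bij.
have out_sum : (\sum_(y | D (l y - l x)) l y = \sum_(z | D z) (z + l x))%R.
  rewrite (reindex_l (fun z => D (z - l x)%R)) (reindex_inj (@addIr _ (l x))).
  by apply: eq_bigl => z; rewrite /= addrK.
have in_sum : (\sum_(y | D (l x - l y)) l y = \sum_(z | D z) (l x - z))%R.
  rewrite (reindex_l (fun z => D (l x - z)%R)) (reindex_inj (@subrI _ (l x))).
  by apply: eq_bigl => z; rewrite /= subKr.
rewrite /diff_orient out_sum in_sum -sumrB; apply: eq_bigr => z _.
by rewrite opprB addrAC -addrA subrK.
Qed.

Lemma diff_orient_orientation (adj : rel V) :
    (forall x y, adj x y = D (l y - l x)%R || D (l x - l y)%R) ->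
    (forall z, ~~ (D z && D (- z)%R)) ->
  is_orientation adj diff_orient.
Proof.
by move=> adjE Dasym x y; rewrite /diff_orient adjE -opprB andbC; split=> //; exact: Dasym.
Qed.

End DifferenceOrientation.

Lemma val_oppZp (p : nat) (z : 'I_p.+1) : 0 < z -> val (- z)%R = p.+1 - z.
Proof. by move=> z_gt0; rewrite /= modn_small //; lia. Qed.

Lemma modn_valZpD (p m : nat) (a b : 'I_p.+1) :
  m %| p.+1 -> val (a + b)%R = a + b %[mod m].
Proof. by move=> mN; rewrite /= modn_dvdm. Qed.

Lemma dvdn_val_oppZp (p m : nat) (z : 'I_p.+1) :
  m %| p.+1 -> (m %| val (- z)%R) = (m %| z).
Proof.
move=> mN; have : m %| val (- z)%R + z.
  by rewrite /dvdn -modn_valZpD // addNr mod0n.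
move=> mD; apply/idP/idP => mdvd.
  by rewrite -(dvdn_addr _ mdvd).
by rewrite -(dvdn_addl _ mdvd).
Qed.

Section LexLabel.
Variables (m n p : nat).
Hypothesis mnN : p.+1 = m * n.

Definition lex_label (x : 'I_m * 'I_n) : 'I_p.+1 := inZp (x.1 + m * x.2).

Lemma lex_label_val x : val (lex_label x) = x.1 + m * x.2.
Proof.
rewrite /= modn_small // mnN; case: x => [[i /= ltim] [j /= ltjn]]; nia.
Qed.

Lemma lex_label_bij : bijective lex_label.
Proof.
apply: inj_card_bij; last by rewrite card_prod !card_ord mnN.
move=> [i j] [i' j'] /(congr1 val); rewrite !lex_label_val /= => E.
have m_gt0 : 0 < m by case: i {E} => /= i; case: m.
have Ei : i = i' :> nat.
  move: (congr1 (modn^~ m) E).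
  by rewrite ![_ + m * _]addnC ![m * _]mulnC !modnMDl !modn_small.
move: E; rewrite Ei => /addnI /eqP; rewrite eqn_pmul2l // => /eqP Ej.
by congr pair; apply: val_inj.
Qed.

Lemma dvdn_lex_label_subr x y :
  (m %| val (lex_label y - lex_label x)%R) = (x.1 == y.1).
Proof.
set d := val _.
have mN : m %| p.+1 by rewrite mnN dvdn_mulr.
have : d + x.1 = y.1 %[mod m].
  have := modn_valZpD (lex_label y - lex_label x)%R (lex_label x) mN.
  rewrite subrK !lex_label_val -/d addnA ![_ + m * _]addnC ![m * _]mulnC.
  by rewrite !modnMDl => ->.
have -> : (m %| d) = (d + x.1 == 0 + x.1 %[mod m]) by rewrite eqn_modDr mod0n.
by move=> ->; rewrite add0n !modn_small // eq_sym.
Qed.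

Definition lower_nonmultiple (z : 'I_p.+1) := ~~ (m %| z) && (z.*2 < p.+1).

Lemma lower_nonmultiple_asym (z : 'I_p.+1) :
  ~~ (lower_nonmultiple z && lower_nonmultiple (- z)%R).
Proof.
rewrite /lower_nonmultiple; case: (posnP z) => [z0 | z_gt0]; first by rewrite z0 dvdn0.
by rewrite val_oppZp //; have := ltn_ord z; lia.
Qed.

Lemma lower_nonmultipleE (z : 'I_p.+1) : odd m || ~~ odd n ->
  ~~ (m %| z) = lower_nonmultiple z || lower_nonmultiple (- z)%R.
Proof.
have mN : m %| p.+1 by rewrite mnN dvdn_mulr.
rewrite /lower_nonmultiple dvdn_val_oppZp //; case: (boolP (m %| z)) => //= mz odd_mn.
have z_gt0 : 0 < z by case: (val z) mz; rewrite ?dvdn0.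
(* the hypothesis odd m || ~~ odd n rules out the self-opposite residue mn/2 *)
have half_N : z.*2 != p.+1.
  apply/eqP => zN; case: (boolP (odd n)) => [odd_n | even_n].
    have odd_m : odd m by move: odd_mn; rewrite odd_n orbF.
    by move: (congr1 odd zN); rewrite odd_double mnN oddM odd_m odd_n.
  have zE : z = m * n./2 :> nat.
    by apply: double_inj; rewrite zN mnN doubleMr even_halfK.
  by rewrite zE dvdn_mulr in mz.
rewrite modn_small; have := ltn_ord z; lia.
Qed.

Lemma lex_orientable_magic : odd m || ~~ odd n ->
  orientable_distance_magic 'I_p.+1 (@KmLexEmpty m n).
Proof.
move=> odd_mn; exists (diff_orient lex_label lower_nonmultiple); split.
  apply: diff_orient_orientation => [x y|]; last exact: lower_nonmultiple_asym.
  rewrite /KmLexEmpty andbF orbF -dvdn_lex_label_subr.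
  by rewrite -[(lex_label x - _)%R]opprB lower_nonmultipleE.
by exists lex_label; apply: diff_orient_magic; exact: lex_label_bij.
Qed.

End LexLabel.

Lemma xor_odd_ord (N : nat) : \big[addb/false]_(i < N) odd i = odd N./2.
Proof.
rewrite -(big_mkord xpredT odd); elim: N => [|N IH]; first by rewrite big_geq.
by rewrite big_nat_recr //= IH uphalf_half oddD; case: (odd N); case: (odd N./2).
Qed.

Section ZpParity.
Variable p : nat.
Hypothesis even_N : ~~ odd p.+1.

Lemma odd_valZpD (a b : 'I_p.+1) : odd (val (a + b)%R) = odd a (+) odd b.
Proof. by rewrite /= odd_mod ?oddD // (negbTE even_N). Qed.

Lemma odd_valZpN (a : 'I_p.+1) : odd (val (- a)%R) = odd a.
Proof. by rewrite /= odd_mod ?oddB ?(negbTE even_N) // ltnW. Qed.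

Lemma odd_valZp_sum (I : finType) (P : pred I) (F : I -> 'I_p.+1) :
  odd (val (\sum_(i | P i) F i)%R) = \big[addb/false]_(i | P i) odd (F i).
Proof. exact: (big_morph (odd \o val) odd_valZpD). Qed.

End ZpParity.

Section ParityObstruction.
Variables (m n p : nat).
Hypotheses (mnN : p.+1 = m * n) (even_m : ~~ odd m).

Let even_N : ~~ odd p.+1. Proof. by rewrite mnN oddM negb_and even_m. Qed.

Definition part_parity (l : 'I_m * 'I_n -> 'I_p.+1) (i : 'I_m) : bool :=
  \big[addb/false]_(y | y.1 == i) odd (l y).

Lemma magic_part_parity_const (o : rel ('I_m * 'I_n)) (l : 'I_m * 'I_n -> 'I_p.+1) :
    is_orientation (@KmLexEmpty m n) o -> directed_distance_magic o l ->
  forall i j, part_parity l i = part_parity l j.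
Proof.
move=> o_orient [_ [mu magic]].
have mu_parity (x : 'I_m * 'I_n) :
    odd (val mu) = \big[addb/false]_y odd (l y) (+) part_parity l x.1.
  rewrite -(magic x) odd_valZpD // odd_valZpN // !odd_valZp_sum //.
  rewrite (big_mkcond (o x)) (big_mkcond (o^~ x)) /part_parity.
  rewrite (big_mkcond (fun y => y.1 == x.1)) -!big_split /=.
  apply: eq_bigr => y _; have [] := o_orient x y.
  rewrite /KmLexEmpty andbF orbF eq_sym.
  by case: (o x y); case: (o y x); case: (y.1 == x.1); case: (odd (l y)).
have n_gt0 : 0 < n by move: mnN; case: n; rewrite ?muln0.
move=> i j; apply: (@addbI (\big[addb/false]_y odd (l y))).
by rewrite -(mu_parity (i, Ordinal n_gt0)) -(mu_parity (j, Ordinal n_gt0)).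
Qed.

Lemma magic_half_even : orientable_distance_magic 'I_p.+1 (@KmLexEmpty m n) ->
  ~~ odd (p.+1)./2.
Proof.
move=> [o [o_orient [l l_magic]]].
have [l_bij _] := l_magic.
have m_gt0 : 0 < m by move: mnN; case: m.
rewrite -xor_odd_ord (reindex l) /=; last exact: onW_bij.
rewrite (partition_big (fun y => y.1) xpredT) //= -/(part_parity l _).
rewrite (eq_bigr (fun _ => part_parity l (Ordinal m_gt0))); last first.
  by move=> i _; exact: (magic_part_parity_const o_orient l_magic).
rewrite big_const_ord; set b := part_parity _ _.
have iterE k : iter k (addb b) false = odd k && b.
  by elim: k => //= k ->; case: (odd k); case: b.
by rewrite iterE (negbTE even_m).
Qed.

Lemma magic_single_vertex_parts : n = 1 ->
  ~ orientable_distance_magic 'I_p.+1 (@KmLexEmpty m n).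
Proof.
move=> n1 [o [o_orient [l l_magic]]].
have part_parity1 (x : 'I_m * 'I_n) : part_parity l x.1 = odd (l x).
  case: x => x1 x2; rewrite /part_parity (big_pred1 (x1, x2)) // => -[y1 y2] /=.
  suff y2E : y2 = x2 by rewrite y2E xpair_eqE eqxx andbT.
  by apply/ord_inj; have := ltn_ord x2; have := ltn_ord y2; lia.
have [[l_inv _ lK] _] := l_magic.
have N_gt1 : 1 < p.+1 by move: even_N; case: p.
have := magic_part_parity_const o_orient l_magic (l_inv 0%R).1 (l_inv (inZp 1)).1.
by rewrite !part_parity1 !lK /= modn_small.
Qed.

End ParityObstruction.

Definition oppr_if (V : zmodType) (b : bool) (z : V) : V := if b then (- z)%R else z.

Lemma oppr_if_addb (V : zmodType) (a b : bool) (z : V) :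
  oppr_if (a (+) b) z = oppr_if a (oppr_if b z).
Proof. by case: a; case: b; rewrite /= ?opprK. Qed.

Lemma oppr_if_sum (V : zmodType) (I : finType) (b : bool) (F : I -> V) :
  oppr_if b (\sum_i F i)%R = (\sum_i oppr_if b (F i))%R.
Proof. by case: b; rewrite /= ?sumrN. Qed.

Section SignedOrientation.
Variables (m n : nat) (neg : 'I_m * 'I_n -> bool).

Definition signed_orient : rel ('I_m * 'I_n) :=
  fun x y => (x.1 != y.1) && ((x.1 < y.1) (+) neg x (+) neg y).

Lemma signed_orient_orientation : is_orientation (@KmLexEmpty m n) signed_orient.
Proof.
move=> x y; rewrite /KmLexEmpty /signed_orient andbF orbF eq_sym.
case: ltngtP => [lt_xy | lt_yx | /val_inj ->]; rewrite ?eqxx //.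
  by rewrite -val_eqE gtn_eqF //=; case: (neg x); case: (neg y).
by rewrite -val_eqE ltn_eqF //=; case: (neg x); case: (neg y).
Qed.

Lemma signed_orient_magic (Gam : finZmodType) (l : 'I_m * 'I_n -> Gam) :
    bijective l -> (forall j, \sum_h oppr_if (neg (j, h)) (l (j, h)) = 0)%R ->
  directed_distance_magic signed_orient l.
Proof.
move=> l_bij part_sum0; split=> //; exists 0%R => x.
rewrite (big_mkcond (signed_orient x)) (big_mkcond (signed_orient^~ x)) -sumrB /=.
pose c y := if x.1 == y.1 then 0%R else
  oppr_if (~~ (x.1 < y.1)) (oppr_if (neg x) (oppr_if (neg y) (l y))).
rewrite (eq_bigr c); last first.
  move=> y _; rewrite /c /signed_orient [y.1 == x.1]eq_sym.
  case: eqP => [_ | /eqP ne]; first by rewrite subr0.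
  rewrite /= -!oppr_if_addb; case: ltngtP ne => [_ _ | _ _ | /val_inj -> /eqP //].
    by case: (neg x); case: (neg y); rewrite /= ?subr0 ?sub0r.
  by case: (neg x); case: (neg y); rewrite /= ?subr0 ?sub0r.
have -> : (\sum_y c y = \sum_j \sum_h c (j, h))%R.
  by rewrite pair_bigA; apply: eq_bigr => -[].
apply: big1 => j _; rewrite /c /=; case: eqP => _; first by rewrite big1.
by rewrite -!oppr_if_sum part_sum0 /=; case: (~~ _); case: (neg x); rewrite /= ?oppr0.
Qed.

End SignedOrientation.

(* Labels for m = 4k and n = 2s + 1: vertex (j, r) of part j gets
   n * row_perm k s r j + r, where each row r |-> row_perm k s r j permutes
   [0, 4k).  Rows r and n - r (2 <= r <= s) use j and 4k - 1 - j, so their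
   labels add up to 4kn = 0.  The rows 0, 1, n - 1 are chosen with
   row0 + row1 + row_last + 1 = 0 (mod 4k), which makes the label sum of a
   part vanish -- except for j = 4k - 1, where it is instead
   -row0 + row1 + row_last + 1 that vanishes; there the sign of vertex (j, 0)
   is flipped.  (No three permutations of Z_4k can satisfy the congruence for
   every j, as summing it over j shows.) *)
Definition row0 k j :=
  if 2 * j < k then k - 1 - 2 * j else if j < 2 * k then 5 * k - 1 - 2 * j
  else if 2 * j < 5 * k - 1 then 5 * k - 2 - 2 * j
  else if j < 4 * k - 1 then 9 * k - 2 - 2 * j else k.
Definition row1 k j := if j < k then j + 3 * k else j - k.
Definition row_last k j :=
  if j < 2 * k then j else if j < 4 * k - 1 then j + 1 else 2 * k.

Definition row_perm k s r j :=
  if r == 0 then row0 k j else if r == 1 then row1 k j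
  else if r == s.*2 then row_last k j else if r <= s then j else 4 * k - 1 - j.

Definition block_label k s j r := s.*2.+1 * row_perm k s r j + r.

Section FourDivisibleLabeling.
Variables (k s : nat).

Lemma row_triple_sum j : j < 4 * k -> j != 4 * k - 1 ->
  row0 k j + row1 k j + row_last k j + 1 \in [:: 4 * k; 8 * k].
Proof. by rewrite !inE /row0 /row1 /row_last; (repeat case: ifP => ?); lia. Qed.

Lemma row_triple_last :
  [/\ row0 k (4 * k - 1) = k, row1 k (4 * k - 1) = 3 * k - 1
    & row_last k (4 * k - 1) = 2 * k].
Proof. by rewrite /row0 /row1 /row_last; (repeat case: ifP => ?); split; lia. Qed.

Lemma row_perm_lt (r : nat) j : j < 4 * k -> row_perm k s r j < 4 * k.
Proof. by rewrite /row_perm /row0 /row1 /row_last; (repeat case: ifP => ?); lia. Qed.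

Lemma row_perm_inj (r : nat) j j' : j < 4 * k -> j' < 4 * k ->
  row_perm k s r j = row_perm k s r j' -> j = j'.
Proof.
rewrite /row_perm; case: ifP => _; first by rewrite /row0; (repeat case: ifP => ?); lia.
case: ifP => _; first by rewrite /row1; (repeat case: ifP => ?); lia.
case: ifP => _; first by rewrite /row_last; (repeat case: ifP => ?); lia.
by case: ifP => _; lia.
Qed.

Lemma block_label_lt j r : j < 4 * k -> r < s.*2.+1 ->
  block_label k s j r < 4 * k * s.*2.+1.
Proof. by move=> lt_j lt_r; have := row_perm_lt r lt_j; rewrite /block_label; nia. Qed.

Lemma block_label_inj j r j' r' :
    j < 4 * k -> r < s.*2.+1 -> j' < 4 * k -> r' < s.*2.+1 ->
  block_label k s j r = block_label k s j' r' -> j = j' /\ r = r'.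
Proof.
move=> lt_j lt_r lt_j' lt_r' E.
have Er : r = r'.
  move: (congr1 (modn^~ s.*2.+1) E).
  by rewrite /block_label ![_.*2.+1 * _]mulnC !modnMDl !modn_small.
move: E; rewrite /block_label Er => /addIn /eqP; rewrite eqn_mul2l /= => /eqP.
by move/row_perm_inj => -> //.
Qed.

Lemma row_perm_sum j : 0 < s -> j < 4 * k ->
  \sum_(r < s.*2.+1) row_perm k s r j =
    row0 k j + row1 k j + row_last k j + (s - 1) * (4 * k - 1).
Proof.
move=> s_gt0 lt_j; rewrite -(big_mkord xpredT (row_perm k s ^~ j)).
rewrite (big_ltn (ltn0Sn _)) (big_ltn (_ : 1 < s.*2.+1)); last by lia.
rewrite (@big_cat_nat _ _ _ s.+1 2 s.*2.+1) ?(@big_cat_nat _ _ _ s.*2 s.+1 s.*2.+1) //;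
  try lia.
rewrite big_nat1 (eq_big_nat _ _ (F2 := fun => j)) => [|r /andP [? ?]]; last first.
  by rewrite /row_perm; (repeat case: ifP => ?); lia.
rewrite (@eq_big_nat _ _ _ s.+1 s.*2 _ (fun => 4 * k - 1 - j)) => [|r /andP [? ?]];
  last first.
  by rewrite /row_perm; (repeat case: ifP => ?); lia.
have -> : row_perm k s s.*2 j = row_last k j.
  by rewrite /row_perm eqxx; (repeat case: ifP => ?); lia.
rewrite !sum_nat_const_nat /=.
have -> : s.+1 - 2 = s - 1 by lia.
have -> : s.*2 - s.+1 = s - 1 by lia.
have : (s - 1) * j + (s - 1) * (4 * k - 1 - j) = (s - 1) * (4 * k - 1).
  by rewrite -mulnDr; congr (_ * _); lia.
rewrite /row_perm /=; lia.
Qed.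

Lemma block_label_sum j : 0 < s -> j < 4 * k ->
  \sum_(r < s.*2.+1) block_label k s j r =
    s.*2.+1 * (row0 k j + row1 k j + row_last k j + 1) + 4 * k * s.*2.+1 * (s - 1).
Proof.
move=> s_gt0 lt_j; rewrite big_split /= -big_distrr /= row_perm_sum //.
rewrite -(big_mkord xpredT id) bin2_sum bin2odd /= ?odd_double // doubleK; nia.
Qed.

End FourDivisibleLabeling.

Lemma inZp_sum (p : nat) (I : finType) (F : I -> nat) :
  (inZp (\sum_i F i) : 'I_p.+1) = (\sum_i inZp (F i))%R.
Proof.
apply: (big_morph (fun a => inZp a : 'I_p.+1)) => [a b|]; apply: val_inj => /=.
  by rewrite modnDm.
by rewrite mod0n.
Qed.

Section FourDivisibleMagic.
Variables (k s p : nat).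
Hypotheses (s_gt0 : 0 < s) (kN : p.+1 = 4 * k * s.*2.+1).

Definition four_label (x : 'I_(4 * k) * 'I_s.*2.+1) : 'I_p.+1 :=
  inZp (block_label k s x.1 x.2).

Definition four_neg (x : 'I_(4 * k) * 'I_s.*2.+1) : bool :=
  (x.2 == 0 :> nat) && (x.1 == 4 * k - 1 :> nat).

Lemma four_label_bij : bijective four_label.
Proof.
apply: inj_card_bij; last by rewrite card_prod !card_ord kN.
move=> [j r] [j' r'] /(congr1 val) /=.
rewrite !modn_small ?kN ?block_label_lt // => /block_label_inj [] // E E'.
by congr pair; apply: val_inj.
Qed.

Lemma four_label_part_sum j :
  (\sum_r oppr_if (four_neg (j, r)) (four_label (j, r)) = 0)%R.
Proof.
have lt_j := ltn_ord j.
have sumE := block_label_sum s_gt0 lt_j.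
case: (eqVneq (j : nat) (4 * k - 1)) => [jE | jNE].
  rewrite big_ord_recl /four_neg /= jE eqxx /=.
  rewrite (eq_bigr (fun r : 'I_s.*2 => four_label (j, lift ord0 r))) // -inZp_sum.
  suff -> : (inZp (\sum_(r < s.*2) block_label k s j (lift ord0 r)) : 'I_p.+1) =
            four_label (j, ord0) by rewrite addNr.
  apply: val_inj => /=; move: sumE; rewrite big_ord_recl jE /block_label /=.
  rewrite [row_perm k s 0 _]/row_perm /=; have [-> -> ->] := row_triple_last k.
  set R := \sum_(i < _) _ => sumE.
  have -> : R = s * p.+1 + (s.*2.+1 * k + 0) by rewrite kN; nia.
  by rewrite modnMDl.
rewrite (eq_bigr (fun r => four_label (j, r))) => [|r _]; last first.
  by rewrite /four_neg /= (negbTE jNE) andbF.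
rewrite -inZp_sum; apply: val_inj => /=; rewrite sumE kN.
have := row_triple_sum lt_j jNE; rewrite !inE => /orP [] /eqP ->.
  by rewrite (_ : _ + _ = s * (4 * k * s.*2.+1)) ?modnMl //; nia.
by rewrite (_ : _ + _ = s.+1 * (4 * k * s.*2.+1)) ?modnMl //; nia.
Qed.

Lemma four_dvd_orientable_magic :
  orientable_distance_magic 'I_p.+1 (@KmLexEmpty (4 * k) s.*2.+1).
Proof.
exists (signed_orient four_neg); split; first exact: signed_orient_orientation.
exists four_label; apply: signed_orient_magic; first exact: four_label_bij.
exact: four_label_part_sum.
Qed.

End FourDivisibleMagic.

Lemma Zcyc_lex_orientable_magic (m n : nat) : 0 < m -> 0 < n -> odd m || ~~ odd n ->
  orientable_distance_magic (Zcyc (m * n)) (@KmLexEmpty m n).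
Proof.
move=> m_gt0 n_gt0; apply: lex_orientable_magic.
by rewrite prednK // muln_gt0 m_gt0.
Qed.

Lemma Zcyc_four_dvd_orientable_magic (m n : nat) : 0 < m -> 4 %| m -> odd n -> 1 < n ->
  orientable_distance_magic (Zcyc (m * n)) (@KmLexEmpty m n).
Proof.
move=> m_gt0 /dvdnP [k mE] odd_n n_gt1.
have nE : n = (n./2).*2.+1 by rewrite -{1}(odd_double_half n) odd_n.
move: (n./2) nE => s nE; subst m n; rewrite mulnC.
apply: four_dvd_orientable_magic; rewrite ?prednK ?muln_gt0 //; lia.
Qed.

Lemma dvd4_even_mod4N2 (m : nat) : ~~ odd m -> m %% 4 != 2 -> 4 %| m.
Proof.
rewrite -(odd_mod m (erefl : odd 4 = false)) /dvdn.
by have := ltn_pmod m (isT : 0 < 4); case: (m %% 4) => [|[|[|[|]]]].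
Qed.

Lemma odd_half_mul (m n : nat) : m %% 4 = 2 -> odd n -> odd (m * n)./2.
Proof.
move=> m42 odd_n; have -> : m * n = ((m %/ 4).*2.+1 * n).*2.
  by rewrite {1}(divn_eq m 4) m42 -muln2; nia.
by rewrite doubleK oddM /= odd_double odd_n.
Qed.

Lemma Zcyc_not_orientable_magic (m n : nat) : 0 < m -> 0 < n -> ~~ odd m -> odd n ->
  n = 1 \/ m %% 4 = 2 -> ~ orientable_distance_magic (Zcyc (m * n)) (@KmLexEmpty m n).
Proof.
move=> m_gt0 n_gt0 even_m odd_n n1_or_m42.
have mnN : (m * n).-1.+1 = m * n by rewrite prednK // muln_gt0 m_gt0.
case: n1_or_m42 => [n1 | m42]; first exact: magic_single_vertex_parts mnN even_m n1.
by move/(magic_half_even mnN even_m); rewrite mnN odd_half_mul.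
Qed.

Theorem theorem5 (m n : nat) (hm : (1 <= m)%N) (hn : (1 <= n)%N) :
  ((2 <= n)%N ->
    (@orientable_distance_magic _ (Zcyc (m * n)) (@KmLexEmpty m n) <->
     (~~ odd n \/ m %% 4 != 2)%N)) /\
  (n = 1%N ->
    (@orientable_distance_magic _ (Zcyc (m * n)) (@KmLexEmpty m n) <-> odd m)).
Proof.
have even_m42 : m %% 4 = 2 -> ~~ odd m.
  by move=> m42; rewrite -(odd_mod m (erefl : odd 4 = false)) m42.
split=> [n_ge2 | n1]; split.
- move=> magic; case: (boolP (odd n)) => [odd_n | ]; [right | by left].
  apply/eqP => m42.
  exact: Zcyc_not_orientable_magic (even_m42 m42) odd_n (or_intror m42) magic.
- case: (boolP (odd m)) => [odd_m _ | even_m].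
    by apply: Zcyc_lex_orientable_magic; rewrite ?odd_m.
  case: (boolP (odd n)) => [odd_n [// | m4N2] | even_n _].
    by apply: Zcyc_four_dvd_orientable_magic; rewrite ?dvd4_even_mod4N2.
  by apply: Zcyc_lex_orientable_magic; rewrite ?even_n ?orbT.
- apply: contraPT => even_m magic.
  by apply: Zcyc_not_orientable_magic (or_introl n1) magic; rewrite ?n1 ?(negbTE even_m).
- by move=> odd_m; apply: Zcyc_lex_orientable_magic; rewrite ?odd_m.
Qed.
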